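(* The following two statements are equivalent. (P) For any $a\in(0,1)$ and $x\in(\frac12,1]$ there exists $\boldsymbol{\mu}\in\Lambda$ with (i) $\mu_1>\mu_2$, $\mu_1+\mu_2\ge1$, (ii) $\lambda(x,\boldsymbol{\mu})=a$, (iii) $x^\star(\boldsymbol{\mu})<\tilde x$, where $\tilde x=(\frac12+x)/2$. (D) For any $\alpha\in\mathbb{R}$ and $x\in(\frac12,1]$ there exists $\boldsymbol{\xi}=(\xi_1,\xi_2)\in\bar\Lambda$ with $(\bar{\mathrm{i}})$ $\xi_1>\xi_2$ and $\xi_1\ge-\xi_2$, $(\bar{\mathrm{ii}})$ $(1-x)\xi_1+x\xi_2=\alpha$, and $(\bar{\mathrm{iii}})$ $\bar d(\xi_1,(1-\tilde x)\xi_1+\tilde x\xi_2)>\bar d(\xi_2,(1-\tilde x)\xi_1+\tilde x\xi_2)$, where $\tilde x=(\frac12+x)/2$.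
   Context: $\Lambda=\{\boldsymbol{\mu}\in(0,1)^2:\mu_1\neq\mu_2\}$. $d(p,q)$ is the Bernoulli Kullback–Leibler divergence. $g(x,\boldsymbol{\mu})=\inf_{\lambda\in(0,1)}[(1-x)d(\lambda,\mu_1)+x\,d(\lambda,\mu_2)]$, $\lambda(x,\boldsymbol{\mu})$ is the minimizing $\lambda$, and $x^\star(\boldsymbol{\mu})=\arg\max_{x\in(0,1)}g(x,\boldsymbol{\mu})$. Let $\phi(\xi)=\log(1+e^\xi)$, so $\phi'(\xi)=\frac{e^\xi}{1+e^\xi}$ is a bijection $\mathbb{R}\to(0,1)$ with inverse $\phi'^{-1}(u)=\log\frac{u}{1-u}$; the natural parameter of $\boldsymbol{\mu}$ is $\boldsymbol{\xi}=(\phi'^{-1}(\mu_1),\phi'^{-1}(\mu_2))$, and $\bar\Lambda=\{\boldsymbol{\xi}\in\mathbb{R}^2:\xi_1\neq\xi_2\}$. The Bregman divergence is $\bar d(\alpha,\beta)=\phi(\alpha)-\phi(\beta)-(\alpha-\beta)\phi'(\beta)$, so that $d(\mu_1,\mu_2)=\bar d(\xi_2,\xi_1)$. *)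

From Stdlib Require Import Reals Lra ClassicalEpsilon.
From Coquelicot Require Import Coquelicot.
Open Scope R_scope.

Definition kl (p q : R) : R :=
  p * ln (p / q) + (1 - p) * ln ((1 - p) / (1 - q)).

Definition gobj (x mu1 mu2 l : R) : R :=
  (1 - x) * kl l mu1 + x * kl l mu2.

Definition gfun (x mu1 mu2 : R) : Rbar :=
  Glb_Rbar (fun y => exists l, 0 < l < 1 /\ y = gobj x mu1 mu2 l).

Definition is_lam_min (x mu1 mu2 l : R) : Prop :=
  0 < l < 1 /\ forall l', 0 < l' < 1 -> gobj x mu1 mu2 l <= gobj x mu1 mu2 l'.

Definition lam (x mu1 mu2 : R) : R :=
  epsilon (inhabits 0) (is_lam_min x mu1 mu2).

Definition is_xstar (mu1 mu2 x : R) : Prop :=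
  0 < x < 1 /\ forall x', 0 < x' < 1 -> Rbar_le (gfun x' mu1 mu2) (gfun x mu1 mu2).

Definition xstar (mu1 mu2 : R) : R :=
  epsilon (inhabits 0) (is_xstar mu1 mu2).

Definition inLambda (mu1 mu2 : R) : Prop :=
  0 < mu1 < 1 /\ 0 < mu2 < 1 /\ mu1 <> mu2.

Definition phi (t : R) : R := ln (1 + exp t).
Definition dphi (t : R) : R := exp t / (1 + exp t).
Definition dbar (a b : R) : R := phi a - phi b - (a - b) * dphi b.

Definition statementP : Prop :=
  forall a x : R, 0 < a < 1 -> 1/2 < x <= 1 ->
    exists mu1 mu2 : R, inLambda mu1 mu2 /\
      (mu1 > mu2 /\ mu1 + mu2 >= 1) /\
      lam x mu1 mu2 = a /\
      xstar mu1 mu2 < (1/2 + x) / 2.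

Definition statementD : Prop :=
  forall alpha x : R, 1/2 < x <= 1 ->
    exists xi1 xi2 : R, xi1 <> xi2 /\
      (xi1 > xi2 /\ xi1 >= - xi2) /\
      (1 - x) * xi1 + x * xi2 = alpha /\
      let xt := (1/2 + x) / 2 in
      dbar xi1 ((1 - xt) * xi1 + xt * xi2) > dbar xi2 ((1 - xt) * xi1 + xt * xi2).

From Stdlib Require Import Reals Lra ClassicalEpsilon.
From Coquelicot Require Import Coquelicot.
Open Scope R_scope.

(* Substituting mu_i = phi'(xi_i) turns everything into statements about the
   log-partition function phi.  For l in (0,1),
   kl l (phi' t) = l ln l + (1 - l) ln (1 - l) - l t + phi t, so the objective
   splits as kl l (phi' m_x) + G x, where m_x = (1 - x) xi1 + x xi2 and
   G x = (1 - x) phi xi1 + x phi xi2 - phi m_x is the Jensen gap of phi.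
   Hence lambda(x, mu) = phi'(m_x) and g(x, mu) = G x.  The gap is maximal
   exactly where phi'(m_x) equals the chord slope s of phi between xi2 and xi1,
   while dbar xi1 m - dbar xi2 m = (xi1 - xi2) (s - phi' m).  As m_x decreases
   in x, both (iii) and its dual say that x~ lies beyond that maximiser. *)

Lemma dphi_bounds t : 0 < dphi t < 1.
Proof.
  unfold dphi. pose proof (exp_pos t). split.
  - apply Rdiv_lt_0_compat; lra.
  - apply Rmult_lt_reg_r with (1 + exp t); [lra|].
    field_simplify; lra.
Qed.

Lemma one_minus_dphi t : 1 - dphi t = / (1 + exp t).
Proof. unfold dphi. pose proof (exp_pos t). field. lra. Qed.

Lemma ln_dphi t : ln (dphi t) = t - phi t.
Proof.
  unfold dphi, phi. pose proof (exp_pos t).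
  rewrite ln_div, ln_exp by lra. ring.
Qed.

Lemma ln_one_minus_dphi t : ln (1 - dphi t) = - phi t.
Proof.
  rewrite one_minus_dphi. unfold phi. pose proof (exp_pos t).
  rewrite ln_Rinv by lra. ring.
Qed.

Lemma dphi_opp t : dphi (- t) = 1 - dphi t.
Proof.
  rewrite one_minus_dphi. unfold dphi. rewrite exp_Ropp.
  pose proof (exp_pos t). field. lra.
Qed.

Lemma dphi_lt a b : a < b -> dphi a < dphi b.
Proof.
  intros Hab.
  assert (E : forall t, dphi t = 1 - / (1 + exp t))
    by (intro t; rewrite <- one_minus_dphi; ring).
  rewrite !E. pose proof (exp_increasing _ _ Hab). pose proof (exp_pos a).
  assert (/ (1 + exp b) < / (1 + exp a)) by (apply Rinv_lt_contravar; nra).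
  lra.
Qed.

Lemma dphi_lt_iff a b : dphi a < dphi b <-> a < b.
Proof.
  split; [|apply dphi_lt]. intros H.
  destruct (Rlt_or_le a b) as [Hab | [Hba | ->]]; [exact Hab | | lra].
  apply dphi_lt in Hba. lra.
Qed.

Lemma dphi_le_iff a b : dphi a <= dphi b <-> a <= b.
Proof.
  split; intros H; apply Rnot_lt_le; intro Hlt.
  - apply dphi_lt in Hlt. lra.
  - apply (proj1 (dphi_lt_iff b a)) in Hlt. lra.
Qed.

Lemma dphi_inj a b : dphi a = dphi b -> a = b.
Proof. intros H. apply Rle_antisym; apply dphi_le_iff; lra. Qed.

Lemma dphi_add_ge1_iff a b : dphi a + dphi b >= 1 <-> a >= - b.
Proof.
  pose proof (dphi_le_iff (- b) a) as Hle. rewrite dphi_opp in Hle.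
  split; intros H.
  - apply Rle_ge, Hle. lra.
  - assert (- b <= a) as Hab%Hle by lra. lra.
Qed.

Definition logit (u : R) : R := ln (u / (1 - u)).

Lemma dphi_logit u : 0 < u < 1 -> dphi (logit u) = u.
Proof.
  intros Hu. unfold dphi, logit. rewrite exp_ln.
  - field. lra.
  - apply Rdiv_lt_0_compat; lra.
Qed.

Lemma ln_lt_sub_1 y : 0 < y -> y <> 1 -> ln y < y - 1.
Proof.
  intros Hy Hy1. assert (Hln : ln y <> 0).
  { intro E. apply Hy1. rewrite <- (exp_ln y Hy), E. apply exp_0. }
  pose proof (exp_ineq1 _ Hln). rewrite exp_ln in *; lra.
Qed.

Lemma kl_pos p q : 0 < p < 1 -> 0 < q < 1 -> p <> q -> 0 < kl p q.
Proof.
  intros Hp Hq Hpq. unfold kl.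
  assert (A : ln (q / p) < q / p - 1).
  { apply ln_lt_sub_1; [apply Rdiv_lt_0_compat; lra|].
    intro E. apply Hpq. apply (Rmult_eq_compat_r p) in E.
    field_simplify in E; lra. }
  assert (B : ln ((1 - q) / (1 - p)) < (1 - q) / (1 - p) - 1).
  { apply ln_lt_sub_1; [apply Rdiv_lt_0_compat; lra|].
    intro E. apply Hpq. apply (Rmult_eq_compat_r (1 - p)) in E.
    field_simplify in E; lra. }
  rewrite ln_div in A, B by lra. rewrite !ln_div by lra.
  assert (p * (q / p - 1) = q - p) by (field; lra).
  assert ((1 - p) * ((1 - q) / (1 - p) - 1) = p - q) by (field; lra).
  nra.
Qed.

Lemma kl_self p : 0 < p < 1 -> kl p p = 0.
Proof.
  intros Hp. unfold kl. replace (p / p) with 1 by (field; lra).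
  replace ((1 - p) / (1 - p)) with 1 by (field; lra). rewrite ln_1. ring.
Qed.

Lemma kl_nonneg p q : 0 < p < 1 -> 0 < q < 1 -> 0 <= kl p q.
Proof.
  intros Hp Hq. destruct (Req_dec p q) as [<- | Hpq].
  - rewrite kl_self; lra.
  - apply Rlt_le, kl_pos; assumption.
Qed.

Lemma kl_dphi l t : 0 < l < 1 ->
  kl l (dphi t) = l * ln l + (1 - l) * ln (1 - l) - l * t + phi t.
Proof.
  intros Hl. pose proof (dphi_bounds t). unfold kl.
  rewrite !ln_div, ln_dphi, ln_one_minus_dphi by lra. ring.
Qed.

Lemma dbar_kl a b : dbar a b = kl (dphi b) (dphi a).
Proof.
  rewrite kl_dphi, ln_dphi, ln_one_minus_dphi by apply dphi_bounds.
  unfold dbar. ring.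
Qed.

Lemma dbar_pos a b : a <> b -> 0 < dbar a b.
Proof.
  intros Hab. rewrite dbar_kl. apply kl_pos; try apply dphi_bounds.
  intro E. apply Hab. symmetry. now apply dphi_inj.
Qed.

Lemma dbar_nonneg a b : 0 <= dbar a b.
Proof. rewrite dbar_kl. apply kl_nonneg; apply dphi_bounds. Qed.

Lemma dbar_self a : dbar a a = 0.
Proof. unfold dbar. ring. Qed.

Definition mix (x a b : R) : R := (1 - x) * a + x * b.

Lemma mix_lt_iff a b x y : b < a -> mix x a b < mix y a b <-> y < x.
Proof. intros Hba. unfold mix. split; intros; nra. Qed.

Definition jensen_gap (x a b : R) : R :=
  (1 - x) * phi a + x * phi b - phi (mix x a b).

Lemma gobj_dphi x a b l : 0 < l < 1 ->
  gobj x (dphi a) (dphi b) l = kl l (dphi (mix x a b)) + jensen_gap x a b.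
Proof.
  intros Hl. unfold gobj, jensen_gap, mix. rewrite !kl_dphi by exact Hl. ring.
Qed.

Lemma epsilon_unique {A : Type} (i : inhabited A) (P : A -> Prop) (w : A) :
  P w -> (forall y, P y -> y = w) -> epsilon i P = w.
Proof. intros Hw Huniq. apply Huniq, epsilon_spec. now exists w. Qed.

Lemma lam_dphi x a b : lam x (dphi a) (dphi b) = dphi (mix x a b).
Proof.
  pose proof (dphi_bounds (mix x a b)) as HL.
  apply epsilon_unique.
  - split; [exact HL|]. intros l Hl. rewrite !gobj_dphi, kl_self by assumption.
    pose proof (kl_nonneg l _ Hl HL). lra.
  - intros l [Hl Hmin]. specialize (Hmin _ HL).
    rewrite !gobj_dphi, kl_self in Hmin by assumption.
    destruct (Req_dec l (dphi (mix x a b))) as [E | Hne]; [exact E|].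
    pose proof (kl_pos _ _ Hl HL Hne). lra.
Qed.

Lemma gfun_dphi x a b : gfun x (dphi a) (dphi b) = Finite (jensen_gap x a b).
Proof.
  pose proof (dphi_bounds (mix x a b)) as HL.
  apply is_glb_Rbar_unique. split.
  - intros y [l [Hl ->]]. simpl. rewrite gobj_dphi by exact Hl.
    pose proof (kl_nonneg l _ Hl HL). lra.
  - intros z Hz. apply Hz. exists (dphi (mix x a b)). split; [exact HL|].
    rewrite gobj_dphi, kl_self by exact HL. ring.
Qed.

Definition chord_slope (a b : R) : R := (phi a - phi b) / (a - b).

Lemma dbar_sub_dbar a b m : a <> b ->
  dbar a m - dbar b m = (a - b) * (chord_slope a b - dphi m).
Proof. intros Hab. unfold dbar, chord_slope. field. lra. Qed.

Lemma chord_slope_bounds a b : b < a -> dphi b < chord_slope a b < dphi a.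
Proof.
  intros Hba.
  pose proof (dbar_sub_dbar a b a ltac:(lra)) as Ea.
  pose proof (dbar_sub_dbar a b b ltac:(lra)) as Eb.
  rewrite dbar_self in Ea, Eb.
  pose proof (dbar_pos b a ltac:(lra)). pose proof (dbar_pos a b ltac:(lra)).
  split; nra.
Qed.

Definition pivot (a b : R) : R := logit (chord_slope a b).
Definition xpivot (a b : R) : R := (a - pivot a b) / (a - b).

Lemma dphi_pivot a b : b < a -> dphi (pivot a b) = chord_slope a b.
Proof.
  intros Hba. pose proof (chord_slope_bounds a b Hba).
  pose proof (dphi_bounds a). pose proof (dphi_bounds b).
  apply dphi_logit. lra.
Qed.

Lemma pivot_between a b : b < a -> b < pivot a b < a.
Proof.
  intros Hba. pose proof (chord_slope_bounds a b Hba).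
  rewrite <- (dphi_pivot a b Hba) in *.
  split; apply dphi_lt_iff; lra.
Qed.

Lemma mix_xpivot a b : b < a -> mix (xpivot a b) a b = pivot a b.
Proof. intros Hba. unfold mix, xpivot. field. lra. Qed.

Lemma xpivot_bounds a b : b < a -> 0 < xpivot a b < 1.
Proof.
  intros Hba. pose proof (pivot_between a b Hba) as Hp.
  rewrite <- (mix_xpivot a b Hba) in Hp. split.
  - apply (mix_lt_iff a b _ 0 Hba).
    replace (mix 0 a b) with a by (unfold mix; ring). lra.
  - apply (mix_lt_iff a b 1 _ Hba).
    replace (mix 1 a b) with b by (unfold mix; ring). lra.
Qed.

Lemma jensen_gap_deficit a b x : b < a ->
  jensen_gap (xpivot a b) a b - jensen_gap x a b = dbar (mix x a b) (pivot a b).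
Proof.
  intros Hba. unfold jensen_gap. rewrite mix_xpivot by exact Hba.
  unfold dbar. rewrite dphi_pivot by exact Hba.
  unfold chord_slope, xpivot, mix. field. lra.
Qed.

Lemma xstar_dphi a b : b < a -> xstar (dphi a) (dphi b) = xpivot a b.
Proof.
  intros Hba. apply epsilon_unique.
  - split; [now apply xpivot_bounds|]. intros x _. rewrite !gfun_dphi. simpl.
    pose proof (jensen_gap_deficit a b x Hba).
    pose proof (dbar_nonneg (mix x a b) (pivot a b)). lra.
  - intros y [_ Hmax]. specialize (Hmax _ (xpivot_bounds a b Hba)).
    rewrite !gfun_dphi in Hmax. simpl in Hmax.
    pose proof (jensen_gap_deficit a b y Hba) as Hdef.
    destruct (Req_dec (mix y a b) (pivot a b)) as [E | Hne].
    + rewrite <- (mix_xpivot a b Hba) in E.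
      destruct (Rtotal_order y (xpivot a b)) as [Hlt | [Heq | Hgt]];
        [apply (mix_lt_iff a b) in Hlt | exact Heq | apply (mix_lt_iff a b) in Hgt];
        lra.
    + pose proof (dbar_pos _ _ Hne). lra.
Qed.

Lemma xstar_lt_iff a b xt : b < a ->
  xstar (dphi a) (dphi b) < xt <-> dbar a (mix xt a b) > dbar b (mix xt a b).
Proof.
  intros Hba.
  rewrite xstar_dphi, <- (mix_lt_iff a b), mix_xpivot, <- dphi_lt_iff, dphi_pivot
    by exact Hba.
  pose proof (dbar_sub_dbar a b (mix xt a b) ltac:(lra)).
  split; intros; nra.
Qed.

Lemma conditions_dphi x alpha a b xt :
  (inLambda (dphi a) (dphi b) /\ (dphi a > dphi b /\ dphi a + dphi b >= 1) /\
   lam x (dphi a) (dphi b) = dphi alpha /\ xstar (dphi a) (dphi b) < xt) <->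
  (a <> b /\ (a > b /\ a >= - b) /\ mix x a b = alpha /\
   dbar a (mix xt a b) > dbar b (mix xt a b)).
Proof.
  rewrite lam_dphi, dphi_add_ge1_iff.
  pose proof (dphi_bounds a). pose proof (dphi_bounds b).
  split.
  - intros (_ & (Hgt & Hsum) & Hlam & Hxs).
    apply (proj1 (dphi_lt_iff b a)) in Hgt.
    repeat split; try lra.
    + now apply dphi_inj.
    + now apply xstar_lt_iff.
  - intros (_ & (Hgt & Hsum) & Hmix & Hd).
    pose proof (dphi_lt _ _ Hgt).
    repeat split; try lra.
    + now rewrite Hmix.
    + now apply xstar_lt_iff.
Qed.

Theorem mainTheorem3 : statementP <-> statementD.
Proof.
  split.
  - intros HP alpha x Hx.
    destruct (HP (dphi alpha) x (dphi_bounds alpha) Hx) as (mu1 & mu2 & Hmu).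
    pose proof Hmu as ((Hmu1 & Hmu2 & _) & _).
    exists (logit mu1), (logit mu2).
    apply (conditions_dphi x alpha _ _ ((1/2 + x) / 2)).
    rewrite !dphi_logit by assumption. exact Hmu.
  - intros HD a x Ha Hx.
    destruct (HD (logit a) x Hx) as (xi1 & xi2 & Hxi).
    exists (dphi xi1), (dphi xi2).
    rewrite <- (dphi_logit a Ha).
    apply (conditions_dphi x (logit a) _ _ ((1/2 + x) / 2)). exact Hxi.
Qed.
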